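(* Let $(f^*,g^* )$ be a stationary $\hat\alpha$-discounted Nash equilibrium of a two-player continuous time stochastic game for some $\hat\alpha>0$, with $\|\mu\|>0$, and suppose: (N1) $(f^*,g^* )$ is pure, i.e. for each $s\in S$ there are $a^1_s\in A^1(s)$, $a^2_s\in A^2(s)$ with $f^*(s,a^1_s)=1$, $g^*(s,a^2_s)=1$; (N2) $Q(f^*,g^* )=0$, i.e. every state is absorbing under $(f^*,g^* )$; (N3) for all $s\in S$, $a^1\in A^1(s)$: $r^1(s,a^1,a^2_s)\ge\sum_{s'}\left(\frac{\mu(s',s,a^1,a^2_s)}{\|\mu\|}+\delta(s,s')\right)r^1(s',a^1_{s'},a^2_{s'})$, and for all $s\in S$, $a^2\in A^2(s)$: $r^2(s,a^1_s,a^2)\ge\sum_{s'}\left(\frac{\mu(s',s,a^1_s,a^2)}{\|\mu\|}+\delta(s,s')\right)r^2(s',a^1_{s'},a^2_{s'})$. Then $(f^*,g^* )$ is a Blackwell-Nash equilibrium.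
   Context: A two-player continuous time stochastic game consists of a finite state set $S$, finite nonempty action sets $A^1(s),A^2(s)$, reward rates $r^i(s,a^1,a^2)$ ($i=1,2$), and transition rates $\mu(s',s,a^1,a^2)\ge0$ from $s$ to $s'\ne s$, with $\mu(s,s,a^1,a^2)=-\sum_{s'\ne s}\mu(s',s,a^1,a^2)$. Let $\|\mu\|=\max_{s,a^1,a^2}\sum_{s'\ne s}\mu(s',s,a^1,a^2)$ and let $\delta(s,s')$ be the Kronecker delta. Stationary strategies $f,g$ assign to each state a probability distribution on $A^1(s)$, resp. $A^2(s)$. For a stationary pair, $r^i(s,f,g)=\sum_{a^1,a^2}f(s,a^1)g(s,a^2)r^i(s,a^1,a^2)$ and $Q(f,g)$ is the generator matrix with $Q(f,g)_{ss'}=\sum_{a^1,a^2}f(s,a^1)g(s,a^2)\mu(s',s,a^1,a^2)$. For $\alpha>0$ the $\alpha$-discounted payoff is $v^i_\alpha(f,g)=(\alpha I-Q(f,g))^{-1}r^i(f,g)$ (equivalently $E^s_{f,g}\int_0^\infty e^{-\alpha t}r^i(s_t,f,g)dt$). A stationary pair $(f^*,g^* )$ is an $\alpha$-discounted Nash equilibrium if for all $s$, $v^1_\alpha(s,f^*,g^* )\ge v^1_\alpha(s,f,g^* )$ for all stationary $f$ and $v^2_\alpha(s,f^*,g^* )\ge v^2_\alpha(s,f^*,g)$ for all stationary $g$. It is a Blackwell-Nash equilibrium (BNE) if there is $\alpha_0>0$ such that it is an $\alpha$-discounted Nash equilibrium for all $\alpha\in(0,\alpha_0]$. *)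

From HB Require Import structures.
From mathcomp Require Import all_boot all_order all_algebra.
Unset Implicit Arguments. Unset Printing Implicit Defensive.
Import Order.TTheory GRing.Theory Num.Theory.
Local Open Scope ring_scope.

Section Game.
Variables (R : realFieldType) (n : nat).
Variables (A1 A2 : 'I_n -> finType).

(* mu s' s a1 a2 : transition rate from s to s' (only meaningful for s' <> s) *)
Definition rates := 'I_n -> forall s : 'I_n, A1 s -> A2 s -> R.
Definition rewards := forall s : 'I_n, A1 s -> A2 s -> R.

Definition mu_full (mu : rates) (s' s : 'I_n) (a1 : A1 s) (a2 : A2 s) : R :=
  if s' == s then - \sum_(t < n | t != s) mu t s a1 a2 else mu s' s a1 a2.

Definition valid_rates (mu : rates) : Prop :=
  forall s' s a1 a2, s' != s -> 0 <= mu s' s a1 a2.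

Definition norm_mu (mu : rates) : R :=
  \big[Num.max/0]_(s < n) \big[Num.max/0]_(a1 : A1 s) \big[Num.max/0]_(a2 : A2 s)
     \sum_(t < n | t != s) mu t s a1 a2.

Definition strat1 (f : forall s, A1 s -> R) : Prop :=
  forall s, (forall a, 0 <= f s a) /\ \sum_(a : A1 s) f s a = 1.
Definition strat2 (g : forall s, A2 s -> R) : Prop :=
  forall s, (forall a, 0 <= g s a) /\ \sum_(a : A2 s) g s a = 1.

Definition rbar (r : rewards) (f : forall s, A1 s -> R) (g : forall s, A2 s -> R)
  : 'cV[R]_n :=
  \col_s \sum_(a1 : A1 s) \sum_(a2 : A2 s) f s a1 * g s a2 * r s a1 a2.

Definition Qmat (mu : rates) (f : forall s, A1 s -> R) (g : forall s, A2 s -> R)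
  : 'M[R]_n :=
  \matrix_(s, s') \sum_(a1 : A1 s) \sum_(a2 : A2 s) f s a1 * g s a2 * mu_full mu s' s a1 a2.

Definition vdisc (mu : rates) (r : rewards) (alpha : R)
  (f : forall s, A1 s -> R) (g : forall s, A2 s -> R) : 'cV[R]_n :=
  invmx (alpha%:M - Qmat mu f g) *m rbar r f g.

Definition is_disc_Nash (mu : rates) (r1 r2 : rewards) (alpha : R)
  (f : forall s, A1 s -> R) (g : forall s, A2 s -> R) : Prop :=
  forall s : 'I_n,
    (forall f', strat1 f' -> vdisc mu r1 alpha f' g s 0 <= vdisc mu r1 alpha f g s 0) /\
    (forall g', strat2 g' -> vdisc mu r2 alpha f g' s 0 <= vdisc mu r2 alpha f g s 0).

Definition is_BNE (mu : rates) (r1 r2 : rewards)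
  (f : forall s, A1 s -> R) (g : forall s, A2 s -> R) : Prop :=
  exists alpha0 : R, 0 < alpha0 /\
    forall alpha, 0 < alpha -> alpha <= alpha0 -> is_disc_Nash mu r1 r2 alpha f g.

End Game.
Arguments mu_full {R n A1 A2} mu s' s a1 a2.
Arguments norm_mu {R n A1 A2} mu.
Arguments vdisc {R n A1 A2} mu r alpha f g.
Arguments is_disc_Nash {R n A1 A2} mu r1 r2 alpha f g.
Arguments is_BNE {R n A1 A2} mu r1 r2 f g.
Arguments Qmat {R n A1 A2} mu f g.
Arguments valid_rates {R n A1 A2} mu.
Arguments strat1 {R n A1} f.
Arguments strat2 {R n A2} g.
Arguments rbar {R n A1 A2} r f g.

From HB Require Import structures.
From mathcomp Require Import all_boot all_order all_algebra.
From mathcomp Require Import ring lra.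
Import Order.TTheory GRing.Theory Num.Theory.
Local Open Scope ring_scope.

(* Fix the opponent's pure equilibrium action: each player then faces a
   one-controller Markov decision problem in which the equilibrium selector b0
   makes every state absorbing, so its alpha-value is r(., b0) / alpha.  Let
   D(s, b) = sum_t mu(t, s, b) r(t, b0) be the drift of the equilibrium reward
   under b.  Comparing at alphahat with the deviation "b at s, b0 elsewhere"
   gives r(s, b) <= r(s, b0) - D(s, b) / alphahat, while (N3) reads
   r(s, b) >= r(s, b0) + D(s, b) / ||mu||.  Hence D <= 0, so
   r(s, b) + D(s, b) / alpha <= r(s, b0) for every alpha <= alphahat: the
   vector r(., b0) / alpha is a supersolution of (alpha - Q_h) v = r_h for every
   stationary h, and the minimum principle for generator matrices bounds the
   value of h by it. *)

Section PointMass.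
Variables (R : realFieldType) (T : finType).

Lemma sum_delta (d : T) (F : T -> R) : \sum_c (c == d)%:R * F c = F d.
Proof.
rewrite (bigD1 d) //= eqxx mul1r big1 ?addr0 // => c /negbTE->.
by rewrite mul0r.
Qed.

Lemma point_mass_delta (h : T -> R) (d : T) :
  (forall c, 0 <= h c) -> \sum_c h c = 1 -> h d = 1 -> forall c, h c = (c == d)%:R.
Proof.
move=> h_ge0 h_sum hd c; have [->|c_neq_d] := eqVneq c d; first by rewrite hd.
have rest0 : \sum_(c | c != d) h c = 0.
  by apply: (@addrI _ 1); rewrite addr0 -[in RHS]h_sum [in RHS](bigD1 d) //= hd.
exact: (psumr_eq0P (fun c _ => h_ge0 c) rest0).
Qed.

Lemma sum_point_mass (h : T -> R) (d : T) :
  (forall c, 0 <= h c) -> \sum_c h c = 1 -> h d = 1 ->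
  forall F : T -> R, \sum_c h c * F c = F d.
Proof.
move=> h_ge0 h_sum hd F; rewrite -sum_delta; apply: eq_bigr => c _.
by rewrite (point_mass_delta _ _ h_ge0 h_sum hd).
Qed.

End PointMass.

Arguments sum_delta {R T}.
Arguments sum_point_mass {R T h d}.

Section Generator.
Variables (R : realFieldType) (n : nat).

Definition generator (Q : 'M[R]_n) :=
  (forall s t, s != t -> 0 <= Q s t) /\ (forall s, \sum_t Q s t = 0).

Lemma resolvent_mulmxE (Q : 'M[R]_n) a (u : 'cV[R]_n) t :
  ((a%:M - Q) *m u) t 0 = a * u t 0 - \sum_j Q t j * u j 0.
Proof. by rewrite mulmxBl mul_scalar_mx !mxE. Qed.

Variables (Q : 'M[R]_n) (a : R).
Hypotheses (a_gt0 : 0 < a) (genQ : generator Q).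

Lemma resolvent_preimage_ge0 (u : 'cV[R]_n) :
  (forall s, 0 <= ((a%:M - Q) *m u) s 0) -> forall s, 0 <= u s 0.
Proof.
move: genQ => [Q_ge0 Q_sum] Mu_ge0 s.
have [m _ u_min] := @arg_minP _ R _ s xpredT (fun i => u i 0) isT.
apply: le_trans (u_min s isT); rewrite -(pmulr_rge0 _ a_gt0).
(* at a minimiser m of u, (Q u)_m is a nonnegative combination of u j - u m *)
have Qu_ge0 : 0 <= \sum_j Q m j * u j 0.
  have -> : \sum_j Q m j * u j 0 = \sum_j Q m j * (u j 0 - u m 0).
    under [RHS]eq_bigr => j _ do rewrite mulrBr.
    by rewrite sumrB -mulr_suml Q_sum mul0r subr0.
  apply: sumr_ge0 => j _; have [->|m_neq_j] := eqVneq m j.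
    by rewrite subrr mulr0.
  by rewrite mulr_ge0 ?Q_ge0 // subr_ge0 u_min.
by have := Mu_ge0 m; rewrite resolvent_mulmxE; lra.
Qed.

Lemma resolvent_unitmx : a%:M - Q \in unitmx.
Proof.
rewrite -unitmx_tr -row_free_unit; apply: inj_row_free => v vM0.
have Mv0 : (a%:M - Q) *m v^T = 0.
  by rewrite -[_ *m _]trmxK trmx_mul trmxK vM0 trmx0.
have v_ge0 s : 0 <= v^T s 0.
  by apply: resolvent_preimage_ge0 => t; rewrite Mv0 mxE.
have v_le0 s : 0 <= (- v^T) s 0.
  by apply: resolvent_preimage_ge0 => t; rewrite mulmxN Mv0 oppr0 mxE.
apply/rowP => i; move: (v_ge0 i) (v_le0 i); rewrite !mxE; lra.
Qed.

Lemma resolvent_inv_le (r w : 'cV[R]_n) :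
  (forall s, r s 0 <= ((a%:M - Q) *m w) s 0) ->
  forall s, (invmx (a%:M - Q) *m r) s 0 <= w s 0.
Proof.
move=> r_le s; rewrite -subr_ge0.
suff : 0 <= (w - invmx (a%:M - Q) *m r) s 0 by rewrite !mxE.
apply: resolvent_preimage_ge0 => t.
rewrite mulmxBr mulKVmx ?resolvent_unitmx // !mxE subr_ge0.
by have := r_le t; rewrite !mxE.
Qed.

End Generator.

Arguments generator {R n}.
Arguments resolvent_unitmx {R n Q a}.
Arguments resolvent_inv_le {R n Q a}.

Section SingleController.
Variables (R : realFieldType) (n : nat) (B : 'I_n -> finType).
Variables (q : forall s, B s -> 'I_n -> R) (rho : forall s, B s -> R).
Implicit Types (h : forall s, B s -> R) (sel : forall s, B s).

Definition mdpQ h : 'M[R]_n := \matrix_(s < n, t < n) \sum_(b : B s) h s b * q s b t.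
Definition mdpr h : 'cV[R]_n := \col_s \sum_(b : B s) h s b * rho s b.
Definition mdp_value a h : 'cV[R]_n := invmx (a%:M - mdpQ h) *m mdpr h.

Definition pure sel : forall s, B s -> R := fun s b => (b == sel s)%:R.

Lemma pure_strat sel : strat1 (pure sel).
Proof.
move=> s; split=> [b|]; first exact: ler0n.
by rewrite -(sum_delta (sel s) (fun=> 1)); apply: eq_bigr => b _; rewrite mulr1.
Qed.

Lemma pure_at sel s : pure sel s (sel s) = 1.
Proof. by rewrite /pure eqxx. Qed.

Section PointMassStrategy.
Variables (h : forall s, B s -> R) (sel : forall s, B s).
Hypotheses (h_strat : strat1 h) (h_sel : forall s, h s (sel s) = 1).

Lemma sum_strat_point_mass s (F : B s -> R) : \sum_b h s b * F b = F (sel s).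
Proof. by have [h_ge0 h_sum] := h_strat s; exact: sum_point_mass. Qed.

Lemma mdpQ_point_mass : mdpQ h = \matrix_(s, t) q s (sel s) t.
Proof. by apply/matrixP => s t; rewrite !mxE sum_strat_point_mass. Qed.

Lemma mdpr_point_mass : mdpr h = \col_s rho s (sel s).
Proof. by apply/matrixP => s t; rewrite !mxE sum_strat_point_mass. Qed.

End PointMassStrategy.

Arguments sum_strat_point_mass {h sel}.
Arguments mdpQ_point_mass {h sel}.
Arguments mdpr_point_mass {h sel}.

Hypothesis q_ge0 : forall s b t, s != t -> 0 <= q s b t.
Hypothesis q_sum : forall s b, \sum_t q s b t = 0.

Lemma q_diag_le0 s b : q s b s <= 0.
Proof.
have := q_sum s b; rewrite (bigD1 s) //= => /eqP; rewrite addr_eq0 => /eqP->.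
by rewrite oppr_le0; apply: sumr_ge0 => t t_neq_s; rewrite q_ge0 // eq_sym.
Qed.

Lemma mdpQ_generator h : strat1 h -> generator (mdpQ h).
Proof.
move=> h_strat; split=> [s t s_neq_t|s].
  rewrite mxE; apply: sumr_ge0 => b _.
  by rewrite mulr_ge0 ?q_ge0 //; case: (h_strat s).
under eq_bigr => t _ do rewrite mxE.
by rewrite exchange_big big1 // => b _; rewrite -mulr_sumr q_sum mulr0.
Qed.

Lemma mdp_valueE a h : 0 < a -> strat1 h ->
  (a%:M - mdpQ h) *m mdp_value a h = mdpr h.
Proof.
move=> a_gt0 h_strat.
by rewrite mulKVmx // (resolvent_unitmx a_gt0 (mdpQ_generator _ h_strat)).
Qed.

Arguments mdp_valueE {a h}.

Variable b0 : forall s, B s.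
Hypothesis q_b0 : forall s t, q s (b0 s) t = 0.

Definition drift s b := \sum_t q s b t * rho t (b0 t).

Lemma mdp_value_absorbing a h : 0 < a -> strat1 h -> (forall s, h s (b0 s) = 1) ->
  mdp_value a h = a^-1 *: \col_t rho t (b0 t).
Proof.
move=> a_gt0 h_strat h_b0.
have Q0 : mdpQ h = 0.
  by rewrite (mdpQ_point_mass h_strat h_b0); apply/matrixP => s t; rewrite !mxE q_b0.
have := mdp_valueE a_gt0 h_strat.
rewrite Q0 subr0 mul_scalar_mx (mdpr_point_mass h_strat h_b0) => <-.
by rewrite scalerA mulVf ?gt_eqF // scale1r.
Qed.

Arguments mdp_value_absorbing {a h}.

Lemma uniformized_sumE lam s b :
  \sum_t (q s b t / lam + (s == t)%:R) * rho t (b0 t) = drift s b / lam + rho s (b0 s).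
Proof.
under eq_bigr => t _ do rewrite mulrDl mulrAC eq_sym.
by rewrite big_split /= -mulr_suml sum_delta.
Qed.

Section Deviation.
Variables (a : R) (s : 'I_n) (b : B s).
Hypothesis a_gt0 : 0 < a.

Let v := mdp_value a (pure (dfwith b0 b)).

Lemma deviation_valueE t :
  a * v t 0 - \sum_j q t (dfwith b0 b t) j * v j 0 = rho t (dfwith b0 b t).
Proof.
have := congr1 (fun M : 'cV_n => M t 0) (mdp_valueE a_gt0 (pure_strat (dfwith b0 b))).
rewrite /= resolvent_mulmxE (mdpQ_point_mass (pure_strat _) (pure_at _)).
rewrite (mdpr_point_mass (pure_strat _) (pure_at _)) mxE => <-.
by congr (_ - _); apply: eq_bigr => j _; rewrite mxE.
Qed.

Lemma deviation_value_out t : s != t -> v t 0 = a^-1 * rho t (b0 t).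
Proof.
move=> s_neq_t; have := deviation_valueE t; rewrite dfwith_out //.
under eq_bigr => j _ do rewrite q_b0 mul0r.
by rewrite big1 // subr0 => <-; rewrite mulKf ?gt_eqF.
Qed.

Lemma deviation_value_at :
  (a - q s b s) * v s 0 = rho s b + a^-1 * \sum_(t | t != s) q s b t * rho t (b0 t).
Proof.
have := deviation_valueE s; rewrite dfwith_in (bigD1 s) //= => <-.
under eq_bigr => t t_neq_s do rewrite deviation_value_out 1?eq_sym // mulrCA.
by rewrite -mulr_sumr; ring.
Qed.

Lemma deviation_drift_bound :
  v s 0 <= a^-1 * rho s (b0 s) -> rho s b <= rho s (b0 s) - drift s b / a.
Proof.
move=> v_le; have val_at := deviation_value_at.
have q_le0 := q_diag_le0 s b.
have scaled : (a - q s b s) * v s 0 <= (a - q s b s) * (a^-1 * rho s (b0 s)).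
  by rewrite ler_wpM2l // subr_ge0 (le_trans q_le0) // ltW.
have expand : (a - q s b s) * (a^-1 * rho s (b0 s))
    = rho s (b0 s) - q s b s * rho s (b0 s) / a.
  by rewrite mulrBl mulrA mulfV ?gt_eqF // mul1r mulrCA mulrC.
rewrite /drift (bigD1 s) //= mulrDl.
set S := \sum_(t | t != s) _ in val_at *.
rewrite [S / a]mulrC; lra.
Qed.

End Deviation.

Arguments deviation_drift_bound {a s b}.

Lemma resolvent_absorbingE a h t : 0 < a -> strat1 h ->
  ((a%:M - mdpQ h) *m (a^-1 *: \col_u rho u (b0 u))) t 0
  = \sum_c h t c * (rho t (b0 t) - drift t c / a).
Proof.
move=> a_gt0 h_strat; have [_ h_sum] := h_strat t.
rewrite resolvent_mulmxE !mxE mulVKf ?gt_eqF //.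
under [RHS]eq_bigr => c _ do rewrite mulrBr.
rewrite sumrB -mulr_suml h_sum mul1r; congr (_ - _).
under eq_bigr => j _ do rewrite !mxE mulr_suml.
rewrite exchange_big; apply: eq_bigr => c _.
by rewrite /drift mulr_suml mulr_sumr; apply: eq_bigr => j _; ring.
Qed.

Lemma mdp_blackwell h0 ah lam :
  strat1 h0 -> (forall s, h0 s (b0 s) = 1) -> 0 < ah -> 0 < lam ->
  (forall h, strat1 h -> forall s, mdp_value ah h s 0 <= mdp_value ah h0 s 0) ->
  (forall s b, \sum_t (q s b t / lam + (s == t)%:R) * rho t (b0 t) <= rho s b) ->
  forall a, 0 < a -> a <= ah ->
  forall h, strat1 h -> forall s, mdp_value a h s 0 <= mdp_value a h0 s 0.
Proof.
move=> h0_strat h0_b0 ah_gt0 lam_gt0 opt_ah uniformized a a_gt0 a_le h h_strat.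
have drift_bound t c : rho t c <= rho t (b0 t) - drift t c / ah.
  apply: (deviation_drift_bound ah_gt0).
  have := opt_ah _ (pure_strat (dfwith b0 c)) t.
  by rewrite (mdp_value_absorbing ah_gt0 h0_strat h0_b0) !mxE.
have drift_le0 t c : drift t c <= 0.
  have := uniformized t c; rewrite uniformized_sumE.
  have := drift_bound t c; case: (lerP (drift t c) 0) => // drift_gt0.
  by have := divr_gt0 drift_gt0 lam_gt0; have := divr_gt0 drift_gt0 ah_gt0; lra.
rewrite (mdp_value_absorbing a_gt0 h0_strat h0_b0).
apply: (resolvent_inv_le a_gt0 (mdpQ_generator _ h_strat)) => t.
rewrite resolvent_absorbingE // mxE; apply: ler_sum => c _.
rewrite ler_wpM2l //; first by case: (h_strat t).
apply: le_trans (drift_bound t c) _; rewrite lerD2l lerN2.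
by apply: (ler_wnM2l (drift_le0 t c)); rewrite lef_pV2 ?posrE.
Qed.

End SingleController.

Arguments mdp_value {R n B} q rho a h.
Arguments mdp_blackwell {R n B q rho} q_ge0 q_sum {b0} q_b0 {h0 ah lam}.

Section TwoPlayerGame.
Variables (R : realFieldType) (n : nat) (A1 A2 : 'I_n -> finType).
Variable mu : rates R n A1 A2.

Lemma mu_full_ge0 : valid_rates mu ->
  forall s a1 a2 t, s != t -> 0 <= mu_full mu t s a1 a2.
Proof.
move=> mu_ge0 s a1 a2 t s_neq_t.
by rewrite /mu_full eq_sym (negbTE s_neq_t) mu_ge0 // eq_sym.
Qed.

Lemma mu_full_sum s a1 a2 : \sum_t mu_full mu t s a1 a2 = 0.
Proof.
rewrite (bigD1 s) //= /mu_full eqxx addrC; apply/eqP; rewrite subr_eq0; apply/eqP.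
by apply: eq_bigr => t /negbTE->.
Qed.

Variables (f : forall s, A1 s -> R) (g : forall s, A2 s -> R).
Variables (a1s : forall s, A1 s) (a2s : forall s, A2 s).
Hypotheses (f_strat : strat1 f) (g_strat : strat2 g).
Hypotheses (f_a1s : forall s, f s (a1s s) = 1) (g_a2s : forall s, g s (a2s s) = 1).

Lemma sum_deviation1 s (f' : A1 s -> R) (F : A1 s -> A2 s -> R) :
  \sum_a1 \sum_a2 f' a1 * g s a2 * F a1 a2 = \sum_a1 f' a1 * F a1 (a2s s).
Proof.
have [g_ge0 g_sum] := g_strat s; apply: eq_bigr => a1 _.
under eq_bigr => a2 _ do rewrite -mulrA.
by rewrite -mulr_sumr (sum_point_mass g_ge0 g_sum (g_a2s s)).
Qed.

Lemma sum_deviation2 s (g' : A2 s -> R) (F : A1 s -> A2 s -> R) :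
  \sum_a1 \sum_a2 f s a1 * g' a2 * F a1 a2 = \sum_a2 g' a2 * F (a1s s) a2.
Proof.
have [f_ge0 f_sum] := f_strat s; rewrite exchange_big; apply: eq_bigr => a2 _.
under eq_bigr => a1 _ do rewrite -mulrA mulrCA.
by rewrite -mulr_sumr (sum_point_mass f_ge0 f_sum (f_a1s s)).
Qed.

Lemma vdisc_deviation1 r alpha f' : vdisc mu r alpha f' g =
  mdp_value (fun s a t => mu_full mu t s a (a2s s)) (fun s a => r s a (a2s s)) alpha f'.
Proof.
by congr (invmx (_ - _) *m _); apply/matrixP => s t; rewrite !mxE sum_deviation1.
Qed.

Lemma vdisc_deviation2 r alpha g' : vdisc mu r alpha f g' =
  mdp_value (fun s a t => mu_full mu t s (a1s s) a) (fun s a => r s (a1s s) a) alpha g'.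
Proof.
by congr (invmx (_ - _) *m _); apply/matrixP => s t; rewrite !mxE sum_deviation2.
Qed.

Lemma Qmat_pure_profile s t : Qmat mu f g s t = mu_full mu t s (a1s s) (a2s s).
Proof.
have [f_ge0 f_sum] := f_strat s.
by rewrite mxE sum_deviation1 (sum_point_mass f_ge0 f_sum (f_a1s s)).
Qed.

End TwoPlayerGame.

Arguments mu_full_ge0 {R n A1 A2 mu}.
Arguments mu_full_sum {R n A1 A2}.
Arguments vdisc_deviation1 {R n A1 A2 mu g a2s} g_strat g_a2s.
Arguments vdisc_deviation2 {R n A1 A2 mu f a1s} f_strat f_a1s.
Arguments Qmat_pure_profile {R n A1 A2 mu f g a1s a2s} f_strat g_strat f_a1s g_a2s.

Theorem theorem6 (R : realFieldType) (n : nat) (A1 A2 : 'I_n -> finType)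
  (hA1 : forall s, (0 < #|A1 s|)%N) (hA2 : forall s, (0 < #|A2 s|)%N)
  (mu : rates R n A1 A2) (hmu : valid_rates mu) (r1 r2 : rewards R n A1 A2)
  (fs : forall s, A1 s -> R) (gs : forall s, A2 s -> R)
  (hf : strat1 fs) (hg : strat2 gs)
  (alphahat : R) (halpha : 0 < alphahat)
  (hNash : is_disc_Nash mu r1 r2 alphahat fs gs)
  (hnorm : 0 < norm_mu mu)
  (a1s : forall s, A1 s) (a2s : forall s, A2 s)
  (N1f : forall s, fs s (a1s s) = 1) (N1g : forall s, gs s (a2s s) = 1)
  (N2 : Qmat mu fs gs = 0)
  (N3a : forall s (a1 : A1 s),
     \sum_(s' < n) (mu_full mu s' s a1 (a2s s) / norm_mu mu + (s == s')%:R)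
                   * r1 s' (a1s s') (a2s s') <= r1 s a1 (a2s s))
  (N3b : forall s (a2 : A2 s),
     \sum_(s' < n) (mu_full mu s' s (a1s s) a2 / norm_mu mu + (s == s')%:R)
                   * r2 s' (a1s s') (a2s s') <= r2 s (a1s s) a2) :
  is_BNE mu r1 r2 fs gs.
Proof.
have absorbing s t : mu_full mu t s (a1s s) (a2s s) = 0.
  by rewrite -(Qmat_pure_profile hf hg N1f N1g) N2 mxE.
have mu_ge0 := mu_full_ge0 hmu.
exists alphahat; split=> // alpha alpha_gt0 alpha_le s; split=> [f f_strat | g g_strat].
- rewrite !(vdisc_deviation1 hg N1g).
  apply: (mdp_blackwell (fun s a => mu_ge0 s a (a2s s))
           (fun s a => mu_full_sum mu s a (a2s s)) absorbing hf N1f halpha hnorm _ N3a) => // h h_strat t.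
  by have := proj1 (hNash t) h h_strat; rewrite !(vdisc_deviation1 hg N1g).
- rewrite !(vdisc_deviation2 hf N1f).
  apply: (mdp_blackwell (fun s a => mu_ge0 s (a1s s) a)
           (fun s a => mu_full_sum mu s (a1s s) a) absorbing hg N1g halpha hnorm _ N3b) => // h h_strat t.
  by have := proj2 (hNash t) h h_strat; rewrite !(vdisc_deviation2 hf N1f).
Qed.
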